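(* Let $P_n(x)$ be a real polynomial all of whose roots are real, with distinct roots $p_1<\dots<p_m$ of multiplicities $r_1,\dots,r_m$. Put $t_k=\sum_{l=1}^m r_lp_l^k$, $H_m=[t_{i+j-2}]_{i,j=1}^m$, and $\mathbf p_i=[1,p_i,\dots,p_i^{m-1}]$ (row vector). Then for all $i,j\in\{1,\dots,m\}$, $$r_j^{-1}-r_i^{-1}=(\mathbf p_j+\mathbf p_i)\,H_m^{-1}\,(\mathbf p_j-\mathbf p_i)^T.$$ *)

From HB Require Import structures.
From mathcomp Require Import all_boot all_order all_algebra.
From mathcomp Require Import all_reals.
Set Implicit Arguments. Unset Strict Implicit. Unset Printing Implicit Defensive.
Import Order.TTheory GRing.Theory Num.Theory.
Local Open Scope ring_scope.

Definition tsum (R : realType) (m : nat) (p : 'I_m -> R) (r : 'I_m -> nat)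
  (k : nat) : R := \sum_(l < m) (r l)%:R * p l ^+ k.

(* Hankel matrix H_m = [t_{i+j-2}]_{i,j=1..m}; with 0-based indices t_{i+j} *)
Definition hankel (R : realType) (m : nat) (p : 'I_m -> R) (r : 'I_m -> nat)
  : 'M[R]_m := \matrix_(i < m, j < m) tsum p r (i + j).

Definition vdm_row (R : realType) (m : nat) (x : R) : 'rV[R]_m :=
  \row_(k < m) x ^+ k.

(** With [V] the Vandermonde matrix whose rows are [p_1, ..., p_m] and [D = diag(r_1, ..., r_m)],
    the Hankel matrix factors as [H_m = V^T D V]. Hence [V H_m^-1 V^T = D^-1], and since [p_i] is
    the [i]-th row of [V], the bilinear form on the right-hand side is the form of [D^-1] evaluated
    at [e_j + e_i] and [e_j - e_i]; being diagonal, it yields [r_j^-1 - r_i^-1]. *)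
From HB Require Import structures.
From mathcomp Require Import all_boot all_order all_algebra.
From mathcomp Require Import all_reals.
From mathcomp Require Import ring.
Set Implicit Arguments. Unset Strict Implicit. Unset Printing Implicit Defensive.
Import Order.TTheory GRing.Theory Num.Theory.
Local Open Scope ring_scope.

Lemma invmx_eq (R : comUnitRingType) (n : nat) (A B : 'M[R]_n) :
  A *m B = 1%:M -> invmx A = B.
Proof.
move=> AB1; have [A_unit _] := mulmx1_unit AB1.
by rewrite -[RHS](mulKmx A_unit) AB1 mulmx1.
Qed.

Lemma invmx_diag (F : fieldType) (n : nat) (d : 'rV[F]_n) :
  (forall k, d 0 k != 0) -> invmx (diag_mx d) = diag_mx (\row_k (d 0 k)^-1).
Proof.
move=> d_neq0; apply: invmx_eq; rewrite mulmx_diag.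
by apply/matrixP => k l; rewrite !mxE divff.
Qed.

Lemma unitmx_diag (F : fieldType) (n : nat) (d : 'rV[F]_n) :
  (forall k, d 0 k != 0) -> diag_mx d \in unitmx.
Proof. by move=> d_neq0; rewrite unitmxE det_diag unitfE; apply/prodf_neq0. Qed.

Lemma mulmx_congr_invmx (R : comUnitRingType) (n : nat) (U D : 'M[R]_n) :
  U \in unitmx -> D \in unitmx -> U *m invmx (U^T *m D *m U) *m U^T = invmx D.
Proof.
move=> U_unit D_unit; set H := U^T *m D *m U.
have H_unit : H \in unitmx by rewrite !unitmx_mul unitmx_tr U_unit D_unit.
symmetry; apply/invmx_eq/mulmx1C.
rewrite -(mulmxK U_unit (_ *m D)) -(mulmxA _ D U) -(mulmxA _ U^T).
by rewrite (mulmxA U^T) -/H -(mulmxA U) mulVmx // mulmx1 mulmxV.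
Qed.

Lemma diag_form_add_sub (R : comPzRingType) (n : nat) (c : 'rV[R]_n) (i j : 'I_n) :
  (('e_j + 'e_i : 'rV_n) *m diag_mx c *m ('e_j - 'e_i : 'rV_n)^T) 0 0 = c 0 j - c 0 i.
Proof.
have [-> | neq_ij] := eqVneq i j; first by rewrite !subrr trmx0 mulmx0 mxE.
rewrite raddfB /= mulmxDl !mulmxBr -!rowE !row_diag_mx !trmx_delta.
rewrite !mulmxDl -!scalemxAl !mul_delta_mx_cond (negPf neq_ij) eq_sym (negPf neq_ij).
by rewrite !eqxx !mxE /=; ring.
Qed.

Section VandermondeFactorization.

Variables (R : realType) (m : nat) (p : 'I_m -> R) (r : 'I_m -> nat).

Definition vdm_mx : 'M[R]_m := \matrix_(k, l) p k ^+ l.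

Definition mult_row : 'rV[R]_m := \row_l (r l)%:R.

Lemma vdm_rowE (k : 'I_m) : vdm_row m (p k) = 'e_k *m vdm_mx.
Proof. by rewrite -rowE; apply/rowP => l; rewrite !mxE. Qed.

Lemma hankel_vdmE : hankel p r = vdm_mx^T *m diag_mx mult_row *m vdm_mx.
Proof.
apply/matrixP => k l; rewrite mul_mx_diag !mxE.
by apply: eq_bigr => q _; rewrite !mxE exprD mulrCA mulrA.
Qed.

Lemma vdm_mx_unit : injective p -> vdm_mx \in unitmx.
Proof.
move=> p_inj; have -> : vdm_mx = (Vandermonde m (\row_l p l))^T.
  by apply/matrixP => k l; rewrite !mxE.
rewrite unitmx_tr unitmxE det_Vandermonde unitfE.
apply/prodf_neq0 => k _; apply/prodf_neq0 => l lt_kl.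
by rewrite !mxE subr_eq0 (inj_eq p_inj) gt_eqF.
Qed.

Lemma mult_row_neq0 : (forall l, 0 < r l)%N -> forall l, mult_row 0 l != 0.
Proof. by move=> r_gt0 l; rewrite mxE pnatr_eq0 -lt0n. Qed.

End VandermondeFactorization.

Theorem corollary1 (R : realType) (P : {poly R}) (m : nat)
  (p : 'I_m -> R) (r : 'I_m -> nat)
  (hP0 : P != 0)
  (hp : forall a b : 'I_m, (a < b)%N -> p a < p b)
  (hr : forall l : 'I_m, (0 < r l)%N)
  (hfact : P = lead_coef P *: \prod_(l < m) ('X - (p l)%:P) ^+ r l)
  (i j : 'I_m) :
  (r j)%:R^-1 - (r i)%:R^-1 =
  ((vdm_row m (p j) + vdm_row m (p i)) *m invmx (hankel p r)
     *m (vdm_row m (p j) - vdm_row m (p i))^T) 0 0.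
Proof.
have p_inj : injective p.
  by move=> a b pab; case: (ltngtP a b) => [/hp|/hp|/val_inj //]; rewrite pab ltxx.
have mult_unit := unitmx_diag (mult_row_neq0 R hr).
rewrite !vdm_rowE -mulmxDl -mulmxBl trmx_mul hankel_vdmE !mulmxA.
rewrite -(mulmxA _ (vdm_mx p)) -(mulmxA _ (vdm_mx p *m _)).
rewrite mulmx_congr_invmx ?vdm_mx_unit // invmx_diag; last exact: mult_row_neq0 hr.
by rewrite diag_form_add_sub !mxE.
Qed.
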